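(* Let $\alpha>0$ and $p\in\big(0,\max\{\alpha/2,\alpha-1\}\big]$. Then $$\widehat M_{p,\alpha}:=\sup\Big\{\frac{\alpha^2}{4p^2}\,\frac{z^2}{\Phi_{p,\alpha}(z)}:\ z\in\mathbb R\setminus\{0\}\Big\}<\infty,$$ and the Legendre transform satisfies $\Phi^*_{p,\alpha}(\xi)\le\widehat M_{p,\alpha}\big(\tfrac p\alpha\xi\big)^2$ for all $\xi\in\mathbb R$. Moreover, $\widehat M_{p,\alpha}\ge1/4$; for $p=1/2$ and $\alpha\ge1$ one has $\widehat M_{1/2,\alpha}\le\alpha/2$ and $\widehat M_{1/2,1}=1/2$; and for $p>0$ and $\alpha=p+1$ one has $\widehat M_{p,p+1}=1/4$.
   Context: For $\alpha>0$, $p>0$: $\Phi_{p,\alpha}(z)=\frac{\alpha}{p-1}\big((z+1)^{(p-1)/p}-1\big)\big((z+1)^{\alpha/p}-1\big)$ for $z>-1$ if $p\ne1$, $\Phi_{1,\alpha}(z)=\alpha\log(z+1)\big((z+1)^\alpha-1\big)$ for $z>-1$ (the limit $p\to1$), and $\Phi_{p,\alpha}(z)=+\infty$ for $z\le-1$. $\Phi^*_{p,\alpha}(\xi)=\sup_z\{\xi z-\Phi_{p,\alpha}(z)\}$. *)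

From Stdlib Require Import Reals.
From Coquelicot Require Import Coquelicot.
Open Scope R_scope.

Definition Phi (p alpha : R) (z : R) : Rbar :=
  if Rlt_dec (-1) z then
    if Req_EM_T p 1 then
      Finite (alpha * ln (z + 1) * (Rpower (z + 1) alpha - 1))
    else
      Finite (alpha / (p - 1) * (Rpower (z + 1) ((p - 1) / p) - 1)
                              * (Rpower (z + 1) (alpha / p) - 1))
  else p_infty.

(* Legendre transform Phi^*(xi) = sup_z { xi z - Phi(z) } in R u {+oo}.
   Values xi z - Phi z = -oo (z <= -1) do not contribute to the sup. *)
Definition PhiStar (p alpha : R) (xi : R) : Rbar :=
  Lub_Rbar (fun y : R => exists z : R,
    Finite y = Rbar_minus (Finite (xi * z)) (Phi p alpha z)).

(* \hat M_{p,alpha} = sup { alpha^2/(4p^2) * z^2 / Phi(z) : z <> 0 },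
   with the convention c / (+oo) = 0. *)
Definition Mhat (p alpha : R) : Rbar :=
  Lub_Rbar (fun y : R => exists z : R, z <> 0 /\
    Finite y = Rbar_div (Finite (alpha ^ 2 / (4 * p ^ 2) * z ^ 2)) (Phi p alpha z)).

From Stdlib Require Import Reals Lra Psatz.
From Coquelicot Require Import Coquelicot.
Open Scope R_scope.

(* Substituting z = e^h - 1 (h = ln (z+1)) turns Phi_{p,alpha} into
     Phi(e^h - 1) = b^2 * D_a(h) * D_b(h),   a = (p-1)/p,  b = alpha/p,
   where D_c(h) = (e^{ch} - 1)/c (and D_0(h) = h) is the exponential difference
   quotient [dexp].  For z > -1, z <> 0 the quantity alpha^2/(4p^2) z^2/Phi(z)
   becomes [ratio a b h] = (e^h - 1)^2 / (4 D_a(h) D_b(h)) with h <> 0, while every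
   z <= -1 contributes the value 0.  So \hat M is the supremum of [ratio a b].
   - Near h = 0, the estimates h^2 e^{-|c h|} <= h D_c(h) <= h^2 e^{|c h|} squeeze
     [ratio] between e^{-K|h|}/4 and e^{K|h|}/4: it is bounded there and 1/4 is a
     limit value, whence \hat M >= 1/4.
   - For h <= -1, D_a D_b stays above a positive constant; for h >= 1 it grows
     at least like e^{2h} as soon as b >= 2 or (a > 0 and a + b >= 2), and the
     hypothesis p <= max(alpha/2, alpha-1) gives one of these.  Hence \hat M is finite.
   - The Legendre bound is Young's inequality xi z <= M q^2 + b^2 z^2/(4M),
     with xi = b q, i.e. q = p xi/alpha.
   - The explicit values use the exact forms of [ratio] for a = -1 (p = 1/2) and for
     (a, b) = (1-d, 1+d) (alpha = p+1); the latter reduces, through cosh, to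
     cosh(dx) - 1 <= d^2 (cosh x - 1) for 0 <= d <= 1. *)

Lemma sq_pos (x : R) : x <> 0 -> 0 < x ^ 2.
Proof. intros Hx; rewrite <- Rsqr_pow2; now apply Rsqr_pos_lt. Qed.

Lemma exp_le_mono (x y : R) : x <= y -> exp x <= exp y.
Proof.
  intros Hxy; destruct (Rle_lt_or_eq_dec _ _ Hxy) as [Hlt | ->]; [|lra].
  now left; apply exp_increasing.
Qed.

Lemma exp_opp_mul (x : R) : exp x * exp (- x) = 1.
Proof. now rewrite <- exp_plus, Rplus_opp_r, exp_0. Qed.

Lemma expm1_bounds (x : R) : x <= exp x - 1 <= x * exp x.
Proof.
  pose proof (exp_ineq1_le x); pose proof (exp_ineq1_le (- x)).
  pose proof (exp_pos x); pose proof (exp_opp_mul x); split; nra.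
Qed.

Lemma expm1_sandwich (x : R) :
  x ^ 2 * exp (- Rabs x) <= x * (exp x - 1) <= x ^ 2 * exp (Rabs x).
Proof.
  pose proof (expm1_bounds x); pose proof (exp_pos x).
  destruct (Rle_or_lt 0 x) as [Hx | Hx].
  - rewrite Rabs_pos_eq by lra.
    assert (exp (- x) <= 1) by (rewrite <- exp_0; apply exp_le_mono; lra).
    split; nra.
  - rewrite Rabs_left, Ropp_involutive by lra.
    assert (1 <= exp (- x)) by (rewrite <- exp_0; apply exp_le_mono; lra).
    split; nra.
Qed.

Lemma nonneg_of_deriv_nonneg (g g' : R -> R) (y : R) :
  0 <= y -> g 0 = 0 ->
  (forall c, 0 <= c <= y -> derivable_pt_lim g c (g' c)) ->
  (forall c, 0 <= c <= y -> 0 <= g' c) -> 0 <= g y.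
Proof.
  intros Hy Hg0 Hder Hpos.
  destruct (Rle_lt_or_eq_dec _ _ Hy) as [Hlt | <-]; [|lra].
  destruct (MVT_cor2 g g' 0 y Hlt Hder) as [c [Hmvt Hc]].
  specialize (Hpos c ltac:(lra)); nra.
Qed.

(* The exponential difference quotient D_c(h) = (e^{ch} - 1)/c, extended by
   continuity with D_0(h) = h.  Phi_{p,alpha} factors through it (see [Phi_exp]). *)
Definition dexp (c h : R) : R :=
  if Req_EM_T c 0 then h else (exp (c * h) - 1) / c.

Lemma dexp_nonzero (c h : R) : c <> 0 -> dexp c h = (exp (c * h) - 1) / c.
Proof. intros Hc; unfold dexp; now destruct (Req_EM_T c 0). Qed.

Lemma dexp_rate_0 (h : R) : dexp 0 h = h.
Proof. unfold dexp; now destruct (Req_EM_T 0 0). Qed.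

Lemma dexp_rate_1 (h : R) : dexp 1 h = exp h - 1.
Proof. rewrite dexp_nonzero by lra; rewrite Rmult_1_l; field. Qed.

Lemma dexp_rate_2 (h : R) : dexp 2 h = exp h * sinh h.
Proof.
  rewrite dexp_nonzero by lra; unfold sinh.
  replace (2 * h) with (h + h) by ring; rewrite exp_plus.
  replace (exp h * ((exp h - exp (- h)) / 2)) with ((exp h * exp h - exp h * exp (- h)) / 2)
    by field.
  now rewrite exp_opp_mul.
Qed.

Lemma dexp_rate_neg1 (h : R) : dexp (-1) h = 1 - exp (- h).
Proof. rewrite dexp_nonzero by lra; replace (-1 * h) with (- h) by ring; field. Qed.

Lemma dexp_at_origin (c : R) : dexp c 0 = 0.
Proof.
  unfold dexp; destruct (Req_EM_T c 0); [reflexivity|].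
  rewrite Rmult_0_r, exp_0, Rminus_diag; apply Rdiv_0_l.
Qed.

Lemma dexp_sandwich (c h : R) :
  h ^ 2 * exp (- (Rabs c * Rabs h)) <= h * dexp c h <= h ^ 2 * exp (Rabs c * Rabs h).
Proof.
  unfold dexp; destruct (Req_EM_T c 0) as [-> | Hc].
  - rewrite Rabs_R0, Rmult_0_l, Ropp_0, exp_0; lra.
  - assert (Hc2 : 0 < c ^ 2) by (now apply sq_pos).
    destruct (expm1_sandwich (c * h)) as [L U]; rewrite Rabs_mult in L, U.
    replace (h * ((exp (c * h) - 1) / c)) with ((c * h) * (exp (c * h) - 1) / c ^ 2)
      by (field; auto).
    replace (h ^ 2 * exp (- (Rabs c * Rabs h)))
      with ((c * h) ^ 2 * exp (- (Rabs c * Rabs h)) / c ^ 2) by (field; auto).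
    replace (h ^ 2 * exp (Rabs c * Rabs h))
      with ((c * h) ^ 2 * exp (Rabs c * Rabs h) / c ^ 2) by (field; auto).
    unfold Rdiv; assert (0 < / c ^ 2) by (apply Rinv_0_lt_compat; lra).
    split; apply Rmult_le_compat_r; lra.
Qed.

Lemma dexp_sign (c h : R) : h <> 0 -> 0 < h * dexp c h.
Proof.
  intros Hh; destruct (dexp_sandwich c h) as [L _].
  assert (0 < h ^ 2) by (now apply sq_pos).
  pose proof (exp_pos (- (Rabs c * Rabs h))); nra.
Qed.

Lemma dexp_neq0 (c h : R) : h <> 0 -> dexp c h <> 0.
Proof. intros Hh Z; pose proof (dexp_sign c h Hh) as Hs; rewrite Z, Rmult_0_r in Hs; lra. Qed.

Lemma dexp_mono (c h1 h2 : R) : h1 <= h2 -> dexp c h1 <= dexp c h2.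
Proof.
  intros H12; unfold dexp; destruct (Req_EM_T c 0) as [_ | Hc]; [lra|].
  destruct (Rlt_or_le 0 c) as [Hpos | Hneg].
  - assert (exp (c * h1) <= exp (c * h2)) by (apply exp_le_mono; nra).
    unfold Rdiv; apply Rmult_le_compat_r; [left; apply Rinv_0_lt_compat|]; lra.
  - assert (exp (c * h2) <= exp (c * h1)) by (apply exp_le_mono; nra).
    assert (/ c < 0) by (apply Rinv_lt_0_compat; lra).
    unfold Rdiv; nra.
Qed.

Lemma dexp_ge_exp (c h : R) : 0 < c -> 1 <= h ->
  (1 - exp (- c)) / c * exp (c * h) <= dexp c h.
Proof.
  intros Hc Hh; rewrite dexp_nonzero by lra.
  assert (exp (- c) * exp (c * h) = exp (c * h - c)) by (rewrite <- exp_plus; f_equal; ring).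
  assert (1 <= exp (c * h - c)) by (rewrite <- exp_0; apply exp_le_mono; nra).
  unfold Rdiv; rewrite Rmult_assoc, (Rmult_comm (/ c)), <- Rmult_assoc.
  apply Rmult_le_compat_r; [left; apply Rinv_0_lt_compat|]; lra.
Qed.

Lemma dexp_prod_pos (a b h : R) : h <> 0 -> 0 < dexp a h * dexp b h.
Proof.
  intros Hh; pose proof (dexp_sign a h Hh); pose proof (dexp_sign b h Hh).
  assert (0 < h ^ 2) by (now apply sq_pos).
  nra.
Qed.

Lemma Phi_exp (p alpha h : R) : 0 < p -> 0 < alpha ->
  Phi p alpha (exp h - 1) =
  Finite ((alpha / p) ^ 2 * (dexp ((p - 1) / p) h * dexp (alpha / p) h)).
Proof.
  intros Hp Ha; pose proof (exp_pos h).
  unfold Phi; destruct (Rlt_dec (-1) (exp h - 1)) as [_ | ?]; [|lra].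
  unfold Rpower; replace (exp h - 1 + 1) with (exp h) by ring; rewrite ln_exp.
  rewrite (dexp_nonzero (alpha / p)) by (apply Rgt_not_eq, Rdiv_lt_0_compat; lra).
  destruct (Req_EM_T p 1) as [-> | Hp1]; f_equal.
  - replace ((1 - 1) / 1) with 0 by field; unfold dexp; destruct (Req_EM_T 0 0); [|lra].
    rewrite !Rdiv_1_r, Rmult_comm; field; lra.
  - rewrite dexp_nonzero.
    + field; repeat split; lra.
    + intro Z; apply Hp1; apply (Rmult_eq_reg_r (/ p)); [|apply Rinv_neq_0_compat; lra].
      unfold Rdiv in Z; lra.
Qed.

(* The quotient whose supremum is \hat M, written in the variable h:
   alpha^2/(4p^2) z^2 / Phi(z) = ratio a b h for z = e^h - 1. *)
Definition ratio (a b h : R) : R := (exp h - 1) ^ 2 / (4 * (dexp a h * dexp b h)).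

Lemma mul_sandwich (x y lx ux ly uy : R) :
  0 <= lx -> lx <= x <= ux -> 0 <= ly -> ly <= y <= uy -> lx * ly <= x * y <= ux * uy.
Proof. intros Hlx Hx Hly Hy; split; apply Rmult_le_compat; lra. Qed.

Lemma dexp_prod_sandwich (a b h : R) :
  h ^ 4 * exp (- ((Rabs a + Rabs b) * Rabs h)) <= h ^ 2 * (dexp a h * dexp b h) <=
  h ^ 4 * exp ((Rabs a + Rabs b) * Rabs h).
Proof.
  assert (Hsplit : forall t, h ^ 4 * exp ((Rabs a + Rabs b) * t) =
    h ^ 2 * exp (Rabs a * t) * (h ^ 2 * exp (Rabs b * t)))
    by (intro t; rewrite Rmult_plus_distr_r, exp_plus; ring).
  replace (- ((Rabs a + Rabs b) * Rabs h)) with ((Rabs a + Rabs b) * (- Rabs h)) by ring.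
  rewrite !Hsplit.
  replace (h ^ 2 * (dexp a h * dexp b h)) with (h * dexp a h * (h * dexp b h)) by ring.
  replace (Rabs a * - Rabs h) with (- (Rabs a * Rabs h)) by ring.
  replace (Rabs b * - Rabs h) with (- (Rabs b * Rabs h)) by ring.
  pose proof (pow2_ge_0 h); pose proof (exp_pos (- (Rabs a * Rabs h)));
    pose proof (exp_pos (- (Rabs b * Rabs h))).
  apply mul_sandwich; try apply dexp_sandwich; apply Rmult_le_pos; lra.
Qed.

(* Near-diagonal control: e^{-K|h|}/4 <= ratio a b h <= e^{K|h|}/4 with
   K = 2 + |a| + |b|, comparing numerator and denominator with h^4. *)
Lemma ratio_sandwich (a b h : R) : h <> 0 ->
  / 4 * exp (- ((2 + Rabs a + Rabs b) * Rabs h)) <= ratio a b h <=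
  / 4 * exp ((2 + Rabs a + Rabs b) * Rabs h).
Proof.
  intros Hh; pose proof (dexp_prod_pos a b h Hh) as HP.
  assert (H4 : 0 < h ^ 4) by (replace (h ^ 4) with ((h ^ 2) ^ 2) by ring; apply pow_lt, sq_pos, Hh).
  pose proof (dexp_prod_sandwich a b h) as [Ld Ud].
  pose proof (dexp_prod_sandwich 1 1 h) as [Ln Un].
  rewrite Rabs_R1, dexp_rate_1 in Ln, Un.
  replace (1 + 1) with 2 in Ln, Un by ring; rewrite exp_Ropp in Ln, Ld.
  set (N := h ^ 2 * ((exp h - 1) * (exp h - 1))) in *.
  set (P := h ^ 2 * (dexp a h * dexp b h)) in *.
  assert (Hr : ratio a b h = N / (4 * P)).
  { unfold ratio, N, P; field; repeat split; auto using dexp_neq0. }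
  set (E2 := exp (2 * Rabs h)) in *; set (Ek := exp ((Rabs a + Rabs b) * Rabs h)) in *.
  assert (HK : exp ((2 + Rabs a + Rabs b) * Rabs h) = E2 * Ek)
    by (unfold E2, Ek; rewrite <- exp_plus; f_equal; ring).
  rewrite exp_Ropp, HK, Hr.
  assert (HE2 : 0 < E2) by apply exp_pos; assert (HEk : 0 < Ek) by apply exp_pos.
  assert (HP' : 0 < P) by (unfold P; apply Rmult_lt_0_compat; [apply sq_pos|]; assumption).
  split.
  - apply (Rle_div_r _ _ (4 * P)); [lra|].
    apply Rle_trans with (h ^ 4 * / E2); [|exact Ln].
    replace (h ^ 4 * / E2) with (/ 4 * / (E2 * Ek) * (4 * (h ^ 4 * Ek))) by (field; lra).
    apply Rmult_le_compat_l; [|lra].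
    apply Rmult_le_pos; [lra|]; left; apply Rinv_0_lt_compat, Rmult_lt_0_compat; lra.
  - apply (Rle_div_l _ _ (4 * P)); [lra|].
    apply Rle_trans with (h ^ 4 * E2); [exact Un|].
    replace (h ^ 4 * E2) with (/ 4 * (E2 * Ek) * (4 * (h ^ 4 * / Ek))) by (field; lra).
    apply Rmult_le_compat_l; [apply Rmult_le_pos; [|apply Rmult_le_pos]|]; lra.
Qed.

Lemma ratio_pos (a b h : R) : h <> 0 -> 0 < ratio a b h.
Proof.
  intros Hh; destruct (ratio_sandwich a b h Hh) as [L _].
  pose proof (exp_pos (- ((2 + Rabs a + Rabs b) * Rabs h))); lra.
Qed.

(* 1/4 is a limit value of [ratio] as h -> 0, so every u < 1/4 is exceeded. *)
Lemma ratio_near_quarter (a b u : R) : u < 1 / 4 -> exists h, h <> 0 /\ u < ratio a b h.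
Proof.
  intros Hu; destruct (Rle_or_lt u 0) as [Hu0 | Hu0].
  { exists 1; split; [lra|]; pose proof (ratio_pos a b 1 ltac:(lra)); lra. }
  set (K := 2 + Rabs a + Rabs b).
  assert (HK : 0 < K) by (unfold K; pose proof (Rabs_pos a); pose proof (Rabs_pos b); lra).
  assert (Hln : ln (4 * u) < 0) by (rewrite <- ln_1; apply ln_increasing; lra).
  set (h := - ln (4 * u) / (2 * K)).
  assert (Hh : 0 < h) by (unfold h; apply Rdiv_lt_0_compat; lra).
  exists h; split; [lra|].
  destruct (ratio_sandwich a b h ltac:(lra)) as [L _]; fold K in L.
  rewrite Rabs_pos_eq in L by lra.
  replace (- (K * h)) with (ln (4 * u) / 2) in L by (unfold h; field; lra).
  assert (exp (ln (4 * u)) < exp (ln (4 * u) / 2)) by (apply exp_increasing; lra).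
  rewrite exp_ln in * by lra; lra.
Qed.

Lemma dexp_prod_growth (a b : R) :
  2 <= b \/ (0 < a /\ 0 < b /\ 2 <= a + b) ->
  exists c, 0 < c /\ forall h, 1 <= h -> c * exp (2 * h) <= dexp a h * dexp b h.
Proof.
  intros Hab.
  assert (Hk : forall c, 0 < c -> 0 < (1 - exp (- c)) / c).
  { intros c Hc; apply Rdiv_lt_0_compat; [|lra].
    assert (exp (- c) < 1) by (rewrite <- exp_0; apply exp_increasing; lra); lra. }
  destruct Hab as [Hb | [Ha [Hb Hab]]].
  - pose proof (dexp_sign a 1 ltac:(lra)) as Ha1; rewrite Rmult_1_l in Ha1.
    exists (dexp a 1 * ((1 - exp (- b)) / b)); split.
    { apply Rmult_lt_0_compat; [|apply Hk]; lra. }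
    intros h Hh.
    pose proof (dexp_mono a 1 h Hh); pose proof (dexp_ge_exp b h ltac:(lra) Hh).
    assert (exp (2 * h) <= exp (b * h)) by (apply exp_le_mono; nra).
    pose proof (Hk b ltac:(lra)); pose proof (exp_pos (2 * h)).
    rewrite Rmult_assoc; apply Rmult_le_compat; nra.
  - exists ((1 - exp (- a)) / a * ((1 - exp (- b)) / b)); split.
    { apply Rmult_lt_0_compat; apply Hk; lra. }
    intros h Hh.
    pose proof (dexp_ge_exp a h Ha Hh); pose proof (dexp_ge_exp b h Hb Hh).
    assert (exp (2 * h) <= exp (a * h) * exp (b * h))
      by (rewrite <- exp_plus; apply exp_le_mono; nra).
    pose proof (Hk a Ha); pose proof (Hk b Hb).
    pose proof (exp_pos (a * h)); pose proof (exp_pos (b * h)); pose proof (exp_pos (2 * h)).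
    apply Rle_trans with ((1 - exp (- a)) / a * exp (a * h) * ((1 - exp (- b)) / b * exp (b * h))).
    + replace ((1 - exp (- a)) / a * exp (a * h) * ((1 - exp (- b)) / b * exp (b * h)))
        with ((1 - exp (- a)) / a * ((1 - exp (- b)) / b) * (exp (a * h) * exp (b * h))) by ring.
      apply Rmult_le_compat_l; nra.
    + apply Rmult_le_compat; nra.
Qed.

(* At -oo both factors are negative and nondecreasing, so D_a D_b stays above
   its value at h = -1. *)
Lemma dexp_prod_floor (a b h : R) : h <= -1 ->
  dexp a (-1) * dexp b (-1) <= dexp a h * dexp b h.
Proof.
  intros Hh.
  pose proof (dexp_sign a (-1) ltac:(lra)); pose proof (dexp_sign b (-1) ltac:(lra)).
  pose proof (dexp_mono a h (-1) Hh); pose proof (dexp_mono b h (-1) Hh); nra.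
Qed.

(* [ratio] is bounded on h <> 0: by the sandwich for |h| <= 1, and because the
   numerator (e^h - 1)^2 is at most e^{2h} (resp. 1) for h >= 1 (resp. h <= -1). *)
Lemma ratio_bounded (a b : R) : 2 <= b \/ (0 < a /\ 0 < b /\ 2 <= a + b) ->
  exists B, forall h, h <> 0 -> ratio a b h <= B.
Proof.
  intros Hab; destruct (dexp_prod_growth a b Hab) as [c [Hc Hgrow]].
  set (K := 2 + Rabs a + Rabs b); set (c' := dexp a (-1) * dexp b (-1)).
  assert (Hc' : 0 < c') by (apply dexp_prod_pos; lra).
  exists (Rmax (/ 4 * exp K) (Rmax (/ (4 * c)) (/ (4 * c')))).
  intros h Hh; pose proof (dexp_prod_pos a b h Hh) as HP; unfold ratio.
  destruct (Rle_or_lt (Rabs h) 1) as [Hs | Hs].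
  - eapply Rle_trans; [|apply Rmax_l].
    destruct (ratio_sandwich a b h Hh) as [_ U]; fold K in U.
    eapply Rle_trans; [exact U|].
    assert (0 <= K) by (unfold K; pose proof (Rabs_pos a); pose proof (Rabs_pos b); lra).
    assert (exp (K * Rabs h) <= exp K) by (apply exp_le_mono; pose proof (Rabs_pos h); nra).
    lra.
  - eapply Rle_trans; [|apply Rmax_r].
    destruct (Rle_or_lt 0 h) as [Hpos | Hneg].
    + eapply Rle_trans; [|apply Rmax_l].
      rewrite Rabs_pos_eq in Hs by lra.
      pose proof (Hgrow h ltac:(lra)).
      assert ((exp h - 1) ^ 2 <= exp (2 * h)).
      { replace (2 * h) with (h + h) by ring; rewrite exp_plus.
        pose proof (expm1_bounds h); nra. }
      apply Rle_div_l; [lra|]; apply Rle_trans with (exp (2 * h)); [assumption|].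
      replace (exp (2 * h)) with (/ (4 * c) * (4 * (c * exp (2 * h)))) at 1 by (field; lra).
      apply Rmult_le_compat_l; [left; apply Rinv_0_lt_compat|]; lra.
    + eapply Rle_trans; [|apply Rmax_r].
      rewrite Rabs_left in Hs by lra.
      pose proof (dexp_prod_floor a b h ltac:(lra)) as Hfloor; fold c' in Hfloor.
      assert ((exp h - 1) ^ 2 <= 1).
      { assert (exp h <= 1) by (rewrite <- exp_0; apply exp_le_mono; lra).
        pose proof (exp_pos h); nra. }
      apply Rle_div_l; [lra|]; apply Rle_trans with 1; [assumption|].
      replace 1 with (/ (4 * c') * (4 * c')) at 1 by (field; lra).
      apply Rmult_le_compat_l; [left; apply Rinv_0_lt_compat|]; lra.
Qed.

Lemma sinh_nonneg (x : R) : 0 <= x -> 0 <= sinh x.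
Proof.
  intros Hx; rewrite <- sinh_0; destruct (Rle_lt_or_eq_dec _ _ Hx) as [H | <-]; [|lra].
  now left; apply sinh_lt.
Qed.

Lemma cosh_even (x : R) : cosh (- x) = cosh x.
Proof. unfold cosh; now rewrite Ropp_involutive, Rplus_comm. Qed.

Lemma cosh_mono (u v : R) : 0 <= u <= v -> cosh u <= cosh v.
Proof.
  intros Huv.
  enough (0 <= cosh (u + (v - u)) - cosh u) by (replace (u + (v - u)) with v in * by ring; lra).
  apply (nonneg_of_deriv_nonneg (fun t => cosh (u + t) - cosh u) (fun t => sinh (u + t)));
    [lra | cbv beta; rewrite Rplus_0_r; ring | |].
  - intros c _; apply is_derive_Reals; unfold cosh, sinh; auto_derive; [easy | field].
  - intros c Hc; apply sinh_nonneg; lra.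
Qed.

Lemma sinh_le_mul_cosh (y : R) : 0 <= y -> sinh y <= y * cosh y.
Proof.
  intros Hy.
  enough (0 <= y * cosh y - sinh y) by lra.
  apply (nonneg_of_deriv_nonneg (fun t => t * cosh t - sinh t) (fun t => t * sinh t));
    [lra | cbv beta; rewrite sinh_0; ring | |].
  - intros c _; apply is_derive_Reals; unfold cosh, sinh; auto_derive; [easy | field].
  - intros c Hc; apply Rmult_le_pos; [|apply sinh_nonneg]; lra.
Qed.

(* Convexity of sinh on [0, +oo): sinh(d y) <= d sinh y for 0 <= d <= 1. *)
Lemma sinh_scale (d y : R) : 0 <= d <= 1 -> 0 <= y -> sinh (d * y) <= d * sinh y.
Proof.
  intros Hd Hy.
  enough (0 <= d * sinh y - sinh (d * y)) by lra.
  apply (nonneg_of_deriv_nonneg (fun t => d * sinh t - sinh (d * t))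
           (fun t => d * (cosh t - cosh (d * t))));
    [lra | cbv beta; rewrite Rmult_0_r, sinh_0; ring | |].
  - intros c _; apply is_derive_Reals; unfold cosh, sinh; auto_derive; [easy | field].
  - intros c Hc; apply Rmult_le_pos; [lra|].
    assert (cosh (d * c) <= cosh c) by (apply cosh_mono; nra); lra.
Qed.

(* Integrating the previous inequality: cosh(d x) - 1 <= d^2 (cosh x - 1). *)
Lemma cosh_scale (d x : R) : 0 <= d <= 1 -> cosh (d * x) - 1 <= d ^ 2 * (cosh x - 1).
Proof.
  intros Hd.
  assert (Hpos : forall y, 0 <= y -> cosh (d * y) - 1 <= d ^ 2 * (cosh y - 1)).
  { intros y Hy.
    enough (0 <= d ^ 2 * (cosh y - 1) - (cosh (d * y) - 1)) by lra.
    apply (nonneg_of_deriv_nonneg (fun t => d ^ 2 * (cosh t - 1) - (cosh (d * t) - 1))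
             (fun t => d * (d * sinh t - sinh (d * t))));
      [lra | cbv beta; rewrite Rmult_0_r, cosh_0; ring | |].
    - intros c _; apply is_derive_Reals; unfold cosh, sinh; auto_derive; [easy | field].
    - intros c Hc; apply Rmult_le_pos; [lra|].
      pose proof (sinh_scale d c Hd (proj1 Hc)); lra. }
  destruct (Rle_or_lt 0 x) as [Hx | Hx]; [now apply Hpos|].
  rewrite <- (cosh_even x), <- (cosh_even (d * x)), Ropp_mult_distr_r.
  apply Hpos; lra.
Qed.

(* The same comparison for all d >= 0, stated sign-free: for d > 1 apply
   [cosh_scale] to 1/d, which reverses the inequality together with 1 - d^2. *)
Lemma cosh_scale_compare (d x : R) : 0 <= d ->
  0 <= (1 - d ^ 2) * (d ^ 2 * (cosh x - 1) - (cosh (d * x) - 1)).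
Proof.
  intros Hd; destruct (Rle_or_lt d 1) as [Hd1 | Hd1].
  - pose proof (cosh_scale d x (conj Hd Hd1)).
    apply Rmult_le_pos; nra.
  - assert (Hinv : 0 <= / d <= 1).
    { split; [left; apply Rinv_0_lt_compat; lra|].
      rewrite <- Rinv_1; apply Rinv_le_contravar; lra. }
    pose proof (cosh_scale (/ d) (d * x) Hinv) as Hs.
    replace (/ d * (d * x)) with x in Hs by (field; lra).
    assert (d ^ 2 * (cosh x - 1) <= cosh (d * x) - 1).
    { replace (cosh (d * x) - 1) with (d ^ 2 * ((/ d) ^ 2 * (cosh (d * x) - 1))) by (field; lra).
      apply Rmult_le_compat_l; [nra | exact Hs]. }
    replace ((1 - d ^ 2) * (d ^ 2 * (cosh x - 1) - (cosh (d * x) - 1)))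
      with ((d ^ 2 - 1) * ((cosh (d * x) - 1) - d ^ 2 * (cosh x - 1))) by ring.
    apply Rmult_le_pos; nra.
Qed.

(* The limiting case d = 1 of the previous comparison: 2 (cosh x - 1) <= x sinh x. *)
Lemma cosh_sub1_le (x : R) : 2 * (cosh x - 1) <= x * sinh x.
Proof.
  assert (Hpos : forall y, 0 <= y -> 2 * (cosh y - 1) <= y * sinh y).
  { intros y Hy.
    enough (0 <= y * sinh y - 2 * (cosh y - 1)) by lra.
    apply (nonneg_of_deriv_nonneg (fun t => t * sinh t - 2 * (cosh t - 1))
             (fun t => t * cosh t - sinh t));
      [lra | cbv beta; rewrite cosh_0; ring | |].
    - intros c _; apply is_derive_Reals; unfold cosh, sinh; auto_derive; [easy | field].
    - intros c Hc; pose proof (sinh_le_mul_cosh c (proj1 Hc)); lra. }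
  destruct (Rle_or_lt 0 x) as [Hx | Hx]; [now apply Hpos|].
  assert (Hodd : sinh (- x) = - sinh x) by (unfold sinh; rewrite Ropp_involutive; field).
  rewrite <- (cosh_even x); replace (x * sinh x) with (- x * sinh (- x)) by (rewrite Hodd; ring).
  apply Hpos; lra.
Qed.

Lemma expm1_sq_cosh (h : R) : (exp h - 1) ^ 2 = 2 * exp h * (cosh h - 1).
Proof.
  unfold cosh; pose proof (exp_opp_mul h).
  replace ((exp h - 1) ^ 2) with (exp h * exp h - 2 * exp h + 1) by ring.
  replace (2 * exp h * ((exp h + exp (- h)) / 2 - 1))
    with (exp h * exp h - 2 * exp h + exp h * exp (- h)) by field; lra.
Qed.

Lemma expm1_prod_cosh (d h : R) :
  (exp ((1 - d) * h) - 1) * (exp ((1 + d) * h) - 1) = 2 * exp h * (cosh h - cosh (d * h)).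
Proof.
  unfold cosh.
  assert (E1 : exp ((1 - d) * h) = exp h * exp (- (d * h)))
    by (rewrite <- exp_plus; f_equal; ring).
  assert (E2 : exp ((1 + d) * h) = exp h * exp (d * h))
    by (rewrite <- exp_plus; f_equal; ring).
  rewrite E1, E2; pose proof (exp_opp_mul h); pose proof (exp_opp_mul (d * h)).
  replace (2 * exp h * ((exp h + exp (- h)) / 2 - (exp (d * h) + exp (- (d * h))) / 2))
    with (exp h * exp h + exp h * exp (- h) - exp h * (exp (d * h) + exp (- (d * h))))
    by field.
  nra.
Qed.

(* alpha = p + 1 means (a, b) = (1 - d, 1 + d) with d = 1/p; then [ratio] <= 1/4. *)
Lemma ratio_balanced (d h : R) : 0 < d -> h <> 0 -> ratio (1 - d) (1 + d) h <= 1 / 4.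
Proof.
  intros Hd Hh; pose proof (dexp_prod_pos (1 - d) (1 + d) h Hh) as HP.
  unfold ratio; apply Rle_div_l; [lra|].
  replace (1 / 4 * (4 * (dexp (1 - d) h * dexp (1 + d) h)))
    with (dexp (1 - d) h * dexp (1 + d) h) by field.
  rewrite expm1_sq_cosh; pose proof (exp_pos h) as He.
  destruct (Req_dec d 1) as [-> | Hd1].
  - replace (1 - 1) with 0 by ring; replace (1 + 1) with 2 by ring.
    rewrite dexp_rate_0, dexp_rate_2; pose proof (cosh_sub1_le h); nra.
  - assert (Hm : 1 - d <> 0) by lra; assert (Hp : 1 + d <> 0) by lra.
    assert (HX : 1 - d ^ 2 <> 0) by (replace (1 - d ^ 2) with ((1 - d) * (1 + d)) by ring;
                                     now apply Rmult_integral_contrapositive).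
    pose proof (sq_pos _ HX) as HX2.
    rewrite !dexp_nonzero by lra.
    replace ((exp ((1 - d) * h) - 1) / (1 - d) * ((exp ((1 + d) * h) - 1) / (1 + d)))
      with ((exp ((1 - d) * h) - 1) * (exp ((1 + d) * h) - 1) * (1 - d ^ 2) / (1 - d ^ 2) ^ 2)
      by (field; auto).
    rewrite expm1_prod_cosh.
    pose proof (cosh_scale_compare d h ltac:(lra)) as Hc.
    apply (Rle_div_r _ _ ((1 - d ^ 2) ^ 2)); [lra|].
    assert (0 <= 2 * exp h * ((1 - d ^ 2) * (d ^ 2 * (cosh h - 1) - (cosh (d * h) - 1))))
      by (apply Rmult_le_pos; lra).
    lra.
Qed.

(* p = 1/2 means a = -1, b = 2 alpha; for b >= 2 one has [ratio] <= b/4. *)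
Lemma ratio_half_bound (b h : R) : 2 <= b -> h <> 0 -> ratio (-1) b h <= b / 4.
Proof.
  intros Hb Hh; pose proof (dexp_prod_pos (-1) b h Hh) as HP.
  unfold ratio; apply Rle_div_l; [lra|].
  rewrite dexp_rate_neg1, dexp_nonzero by lra.
  replace (b / 4 * (4 * ((1 - exp (- h)) * ((exp (b * h) - 1) / b))))
    with ((1 - exp (- h)) * (exp (b * h) - 1)) by (field; lra).
  pose proof (exp_opp_mul h) as Hinv; pose proof (exp_pos h); pose proof (exp_pos (- h)).
  assert (Hsq : exp (2 * h) = exp h * exp h) by (rewrite <- exp_plus; f_equal; ring).
  destruct (Rle_or_lt 0 h) as [Hpos | Hneg].
  - assert (exp (2 * h) <= exp (b * h)) by (apply exp_le_mono; nra).
    assert (1 <= exp h) by (rewrite <- exp_0; apply exp_le_mono; lra).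
    nra.
  - assert (exp (b * h) <= exp (2 * h)) by (apply exp_le_mono; nra).
    assert (exp h <= 1) by (rewrite <- exp_0; apply exp_le_mono; lra).
    nra.
Qed.

Lemma ratio_half_one (h : R) : h <> 0 -> ratio (-1) 2 h = exp h / (2 * (exp h + 1)).
Proof.
  intros Hh; unfold ratio; rewrite dexp_rate_neg1, dexp_nonzero by lra.
  assert (Hsq : exp (2 * h) = exp h * exp h) by (rewrite <- exp_plus; f_equal; ring).
  assert (Hinv : exp (- h) = / exp h) by apply exp_Ropp.
  assert (Hne1 : exp h <> 1).
  { intro E; apply Hh; rewrite <- exp_0 in E; now apply exp_inv in E. }
  pose proof (exp_pos h).
  rewrite Hsq, Hinv; field; repeat split; try lra; intro Z; apply Hne1; nra.
Qed.

Lemma ratio_half_one_near (u : R) : u < 1 / 2 -> exists h, h <> 0 /\ u < ratio (-1) 2 h.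
Proof.
  intros Hu; destruct (Rle_or_lt u 0) as [Hu0 | Hu0].
  { exists 1; split; [lra|]; pose proof (ratio_pos (-1) 2 1 ltac:(lra)); lra. }
  set (t := / (1 - 2 * u)).
  assert (Ht : 1 < t).
  { unfold t; rewrite <- Rinv_1; apply Rinv_lt_contravar; lra. }
  assert (Hh : ln t <> 0) by (rewrite <- ln_1; intro E; apply ln_inv in E; lra).
  exists (ln t); split; [exact Hh|].
  rewrite ratio_half_one, exp_ln by lra.
  apply (Rlt_div_r _ _ (2 * (t + 1))); [lra|].
  assert (t * (1 - 2 * u) = 1) by (unfold t; field; lra); nra.
Qed.

(* The set defining \hat M consists of 0 (from z <= -1, where Phi = +oo) and of
   the values of [ratio] at h <> 0. *)
Lemma Mhat_values (p alpha y : R) : 0 < p -> 0 < alpha ->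
  (exists z : R, z <> 0 /\
     Finite y = Rbar_div (Finite (alpha ^ 2 / (4 * p ^ 2) * z ^ 2)) (Phi p alpha z)) <->
  (y = 0 \/ exists h, h <> 0 /\ y = ratio ((p - 1) / p) (alpha / p) h).
Proof.
  intros Hp Ha.
  assert (Hinfty : forall z, z <= -1 -> Phi p alpha z = p_infty).
  { intros z Hz; unfold Phi; destruct (Rlt_dec (-1) z); [lra | reflexivity]. }
  assert (Hratio : forall h, h <> 0 ->
    Rbar_div (Finite (alpha ^ 2 / (4 * p ^ 2) * (exp h - 1) ^ 2)) (Phi p alpha (exp h - 1)) =
    Finite (ratio ((p - 1) / p) (alpha / p) h)).
  { intros h Hh; rewrite Phi_exp by lra; simpl; f_equal; unfold ratio.
    field; repeat split; try lra; auto using dexp_neq0. }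
  split.
  - intros [z [Hz Hy]]; destruct (Rle_or_lt z (-1)) as [Hle | Hgt].
    + left; rewrite Hinfty in Hy by lra; simpl in Hy; injection Hy; intros ->; ring.
    + right; exists (ln (z + 1)); split.
      * rewrite <- ln_1; intro E; apply ln_inv in E; lra.
      * replace z with (exp (ln (z + 1)) - 1) in Hy by (rewrite exp_ln; lra).
        rewrite Hratio in Hy; [now injection Hy|].
        rewrite <- ln_1; intro E; apply ln_inv in E; lra.
  - intros [-> | [h [Hh ->]]].
    + exists (-2); split; [lra|]; rewrite Hinfty by lra; simpl; f_equal; ring.
    + exists (exp h - 1); split; [|now rewrite Hratio].
      intro E; apply Hh, exp_inv; rewrite exp_0; lra.
Qed.

Lemma Lub_Rbar_finite (S : R -> Prop) (B y0 : R) :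
  (forall y, S y -> y <= B) -> S y0 ->
  exists M, Lub_Rbar S = Finite M /\ (forall y, S y -> y <= M) /\
    (forall B', (forall y, S y -> y <= B') -> M <= B').
Proof.
  intros HB Hy0; destruct (Lub_Rbar_correct S) as [ub lub].
  destruct (Lub_Rbar S) as [M | |] eqn:EL.
  - exists M; repeat split; [exact ub | intros B' HB'; exact (lub (Finite B') HB')].
  - exfalso; exact (lub (Finite B) HB).
  - exfalso; exact (ub y0 Hy0).
Qed.

Lemma Mhat_spec (p alpha B : R) : 0 < p -> 0 < alpha ->
  (forall h, h <> 0 -> ratio ((p - 1) / p) (alpha / p) h <= B) ->
  exists M, Mhat p alpha = Finite M /\
    (forall h, h <> 0 -> ratio ((p - 1) / p) (alpha / p) h <= M) /\
    (forall B', 0 <= B' -> (forall h, h <> 0 -> ratio ((p - 1) / p) (alpha / p) h <= B') ->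
       M <= B').
Proof.
  intros Hp Ha HB; unfold Mhat.
  set (S := fun y : R => exists z : R, z <> 0 /\
    Finite y = Rbar_div (Finite (alpha ^ 2 / (4 * p ^ 2) * z ^ 2)) (Phi p alpha z)).
  assert (HS : forall y, S y <-> (y = 0 \/ exists h, h <> 0 /\
                                   y = ratio ((p - 1) / p) (alpha / p) h))
    by (intro y; apply Mhat_values; lra).
  assert (Hbound : forall B', 0 <= B' ->
    (forall h, h <> 0 -> ratio ((p - 1) / p) (alpha / p) h <= B') -> forall y, S y -> y <= B').
  { intros B' HB0 HB' y Hy; apply HS in Hy as [-> | [h [Hh ->]]]; auto. }
  destruct (Lub_Rbar_finite S (Rmax 0 B) 0) as [M [EM [Mub Mlub]]].
  - apply Hbound; [apply Rmax_l|]; intros h Hh; eapply Rle_trans; [apply HB, Hh | apply Rmax_r].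
  - apply HS; now left.
  - exists M; repeat split; [exact EM | |].
    + intros h Hh; apply Mub, HS; right; now exists h.
    + intros B' HB0 HB'; apply Mlub, Hbound; assumption.
Qed.

Lemma young_quadratic (M P z q b : R) : 0 < M -> z ^ 2 <= 4 * M * P ->
  b * q * z - b ^ 2 * P <= M * q ^ 2.
Proof.
  intros HM Hz.
  assert (Hsq : M * (M * q ^ 2 - b * q * z + b ^ 2 * P) =
          (M * q - b * z / 2) ^ 2 + b ^ 2 / 4 * (4 * M * P - z ^ 2)) by field.
  assert (0 <= M * (M * q ^ 2 - b * q * z + b ^ 2 * P)).
  { rewrite Hsq; pose proof (pow2_ge_0 (M * q - b * z / 2)); pose proof (pow2_ge_0 b); nra. }
  nra.
Qed.

Lemma PhiStar_bound (p alpha M xi : R) : 0 < p -> 0 < alpha -> 0 < M ->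
  (forall h, h <> 0 -> ratio ((p - 1) / p) (alpha / p) h <= M) ->
  Rbar_le (PhiStar p alpha xi) (Finite (M * (p / alpha * xi) ^ 2)).
Proof.
  intros Hp Ha HM Hratio; unfold PhiStar.
  apply (Lub_Rbar_correct _); intros y [z Hy].
  destruct (Rle_or_lt z (-1)) as [Hle | Hgt].
  { unfold Phi in Hy; destruct (Rlt_dec (-1) z); [lra | discriminate]. }
  set (h := ln (z + 1)); set (P := dexp ((p - 1) / p) h * dexp (alpha / p) h).
  assert (Hz : z = exp h - 1) by (unfold h; rewrite exp_ln; lra).
  rewrite Hz, Phi_exp in Hy by lra; fold P in Hy; simpl in Hy; injection Hy as ->.
  assert (HzP : (exp h - 1) ^ 2 <= 4 * M * P).
  { destruct (Req_dec h 0) as [-> | Hh].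
    - unfold P; rewrite exp_0, !dexp_at_origin; lra.
    - pose proof (Hratio h Hh) as Hr.
      pose proof (dexp_prod_pos ((p - 1) / p) (alpha / p) h Hh) as HP; fold P in HP.
      unfold ratio in Hr; fold P in Hr; apply Rle_div_l in Hr; lra. }
  simpl; replace xi with (alpha / p * (p / alpha * xi)) at 1 by (field; lra).
  now apply young_quadratic.
Qed.

Lemma exponents_growth (p alpha : R) : 0 < p -> 0 < alpha ->
  p <= Rmax (alpha / 2) (alpha - 1) ->
  2 <= alpha / p \/ (0 < (p - 1) / p /\ 0 < alpha / p /\ 2 <= (p - 1) / p + alpha / p).
Proof.
  intros Hp Ha Hmax.
  assert (Hsum : (p - 1) / p + alpha / p = (p - 1 + alpha) / p) by (field; lra).
  destruct (Rle_or_lt (2 * p) alpha) as [H2 | H2].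
  - left; apply Rle_div_r; lra.
  - right; unfold Rmax in Hmax; destruct (Rle_dec (alpha / 2) (alpha - 1)); [|lra].
    rewrite Hsum; repeat split; [apply Rdiv_lt_0_compat | apply Rdiv_lt_0_compat |
      apply Rle_div_r]; lra.
Qed.

Theorem mainTheorem12 :
  forall alpha p : R, 0 < alpha -> 0 < p -> p <= Rmax (alpha / 2) (alpha - 1) ->
    (exists M : R, Mhat p alpha = Finite M /\
       (forall xi : R, Rbar_le (PhiStar p alpha xi) (Finite (M * (p / alpha * xi) ^ 2))) /\
       1 / 4 <= M /\
       (p = 1 / 2 -> 1 <= alpha -> M <= alpha / 2) /\
       (p = 1 / 2 -> alpha = 1 -> M = 1 / 2) /\
       (alpha = p + 1 -> M = 1 / 4)).
Proof.
  intros alpha p Ha Hp Hmax.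
  destruct (ratio_bounded _ _ (exponents_growth p alpha Hp Ha Hmax)) as [B HB].
  destruct (Mhat_spec p alpha B Hp Ha HB) as [M [HM [Mub Mleast]]].
  assert (Hquarter : 1 / 4 <= M).
  { apply Rnot_lt_le; intros Hlt.
    destruct (ratio_near_quarter ((p - 1) / p) (alpha / p) M Hlt) as [h [Hh Hgt]].
    pose proof (Mub h Hh); lra. }
  assert (Hhalf : p = 1 / 2 -> (p - 1) / p = -1 /\ alpha / p = 2 * alpha)
    by (intros ->; split; field).
  exists M; split; [exact HM|].
  split; [intro xi; apply PhiStar_bound; [lra | lra | lra | exact Mub]|].
  split; [lra|]; split; [|split].
  - intros Hp2 Ha1; destruct (Hhalf Hp2) as [Ea Eb]; rewrite Ea, Eb in Mleast.
    apply Mleast; [lra|]; intros h Hh.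
    replace (alpha / 2) with (2 * alpha / 4) by field; apply ratio_half_bound; lra.
  - intros Hp2 ->; destruct (Hhalf Hp2) as [Ea Eb]; rewrite Rmult_1_r in Eb.
    rewrite Ea, Eb in Mleast, Mub.
    apply Rle_antisym.
    + apply Mleast; [lra|]; intros h Hh.
      replace (1 / 2) with (2 / 4) by field; apply ratio_half_bound; lra.
    + apply Rnot_lt_le; intros Hlt.
      destruct (ratio_half_one_near M ltac:(lra)) as [h [Hh Hgt]].
      pose proof (Mub h Hh); lra.
  - intros ->; apply Rle_antisym; [|lra].
    replace ((p - 1) / p) with (1 - / p) in Mleast by (field; lra).
    replace ((p + 1) / p) with (1 + / p) in Mleast by (field; lra).
    apply Mleast; [lra|]; intros h Hh.
    apply ratio_balanced; [apply Rinv_0_lt_compat|]; lra.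
Qed.
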